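(* Let $G$ be a group, let $\pi:(0,1]\to(0,1]$ be non-decreasing with $\pi(\gamma)\to0$ as $\gamma\to0$, and let $M=(\mu_n)_{n=1}^\infty$ be a sequence of probability measures on $G$ that detects index uniformly at rate $\pi$. Let $\alpha\in(0,1]$ and suppose $\textup{dc}_M(G)\ge\alpha$. Let $\gamma\in(0,1)$ be such that $\pi(\gamma)<\alpha$, and let $X=\{x\in G:[G:C_G(x)]\le\frac{1}{\gamma}\}$. Then $\limsup_{n\to\infty}\mu_n(X)\ge\alpha-\pi(\gamma)$.
   Context: $M$ detects index uniformly at rate $\pi$ if for every $\varepsilon>0$ there exists $N$ such that for every $m\in\mathbb{N}$ and every subgroup $H$ with $[G:H]\ge m$ (possibly infinite) we have $\mu_n(H)\le\pi(\frac1m)+\varepsilon$ for all $n\ge N$. $\textup{dc}_M(G)=\limsup_n(\mu_n\times\mu_n)(\{(x,y):xy=yx\})$. $C_G(x)$ is the centraliser of $x$. *)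

From HB Require Import structures.
From mathcomp Require Import all_boot all_order all_algebra.
From mathcomp Require Import all_classical all_reals all_analysis.
Set Implicit Arguments.
Unset Strict Implicit.
Unset Printing Implicit Defensive.
Import Order.TTheory GRing.Theory Num.Theory.
Local Open Scope classical_set_scope.
Local Open Scope ring_scope.

Definition is_subgroup (G : groupType) (H : set G) : Prop :=
  [/\ H 1%g, (forall x y, H x -> H y -> H (x * y)%g) & (forall x, H x -> H (x^-1)%g)].

(* [G : H] >= m  (index possibly infinite): there are m pairwise distinct
   left cosets g_i H. *)
Definition index_ge (G : groupType) (H : set G) (m : nat) : Prop :=
  exists g : 'I_m -> G, forall i j, i != j -> ~ H ((g i)^-1 * g j)%g.

(* [G : H] <= r  (r real): the index is finite and at most r, i.e. every
   family of pairwise distinct cosets has at most r members. *)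
Definition index_le (R : realType) (G : groupType) (H : set G) (r : R) : Prop :=
  forall m, index_ge H m -> (m%:R <= r).

Definition centraliser (G : groupType) (x : G) : set G :=
  [set y | (x * y)%g = (y * x)%g].

(* A probability measure on G (on the power set), given by its mass function. *)
Definition is_prob_mass (R : realType) (G : groupType) (p : G -> R) : Prop :=
  (forall x, 0 <= p x) /\ (\esum_(x in [set: G]) (p x)%:E = 1%E).

Definition pmeas (R : realType) (G : groupType) (p : G -> R) (A : set G) : \bar R :=
  \esum_(x in A) (p x)%:E.

Definition pmeas2 (R : realType) (G : groupType) (p : G -> R) (S : set (G * G)) : \bar R :=
  \esum_(z in S) (p z.1 * p z.2)%:E.

Definition detects_index_uniformly (R : realType) (G : groupType)
    (mu : nat -> G -> R) (pi : R -> R) : Prop :=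
  forall eps : R, 0 < eps -> exists N : nat,
    forall (m : nat) (H : set G), (0 < m)%N -> is_subgroup H -> index_ge H m ->
      forall n, (N <= n)%N -> (pmeas (mu n) H <= (pi (m%:R^-1) + eps)%:E)%E.

Definition dcM (R : realType) (G : groupType) (mu : nat -> G -> R) : \bar R :=
  limn_esup (fun n => pmeas2 (mu n) [set z | (z.1 * z.2)%g = (z.2 * z.1)%g]).

From HB Require Import structures.
From mathcomp Require Import all_boot all_order all_algebra.
From mathcomp Require Import all_classical all_reals all_analysis.
Import Order.TTheory GRing.Theory Num.Theory.
Local Open Scope classical_set_scope.
Local Open Scope ring_scope.

(* If x lies outside X, then [G : C_G(x)] > 1/gamma, so detecting index bounds
   mu_n(C_G(x)) by pi(gamma) + eps for large n.  Since
   (mu_n x mu_n)(commuting pairs) = sum_x mu_n(x) mu_n(C_G(x)),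
   the commuting probability is at most mu_n(X) + pi(gamma) + eps; taking
   limsups and letting eps -> 0 gives the claim. *)

Lemma centraliser_subgroup (G : groupType) (x : G) : is_subgroup (centraliser x).
Proof.
split; rewrite /centraliser /=.
- exact: commute1.
- by move=> y z; apply: commuteM.
- by move=> y; apply: commuteV.
Qed.

Lemma commuting_pairsE (G : groupType) :
  [set z : G * G | (z.1 * z.2)%g = (z.2 * z.1)%g] = [set: G] `*`` @centraliser G.
Proof. by apply/seteqP; split=> -[x y] //= [_]. Qed.

Lemma not_index_le_index_gt {R : realType} {G : groupType} {H : set G} {r : R} :
  ~ index_le H r -> exists m, index_ge H m /\ r < m%:R.
Proof.
move=> Hr; apply: contrapT => no_m; apply: Hr => m Hm.
by rewrite leNgt; apply/negP => rm; apply: no_m; exists m.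
Qed.

Section esum_lemmas.
Context {R : realType}.
Local Open Scope ereal_scope.

Lemma le_esumZl {T : choiceType} (I : set T) {k : R} {a : T -> R} :
  (0 <= k)%R -> (forall x, 0 <= a x)%R ->
  \esum_(i in I) (k * a i)%:E <= k%:E * \esum_(i in I) (a i)%:E.
Proof.
move=> k0 a0; apply: ge_ereal_sup => _ [X [finX XI]] <-.
under eq_fsbigr do rewrite EFinM.
rewrite -ge0_mule_fsumr; last by move=> i; rewrite lee_fin.
by rewrite lee_wpmul2l ?lee_fin //; apply: ereal_sup_ubound; exists X.
Qed.

Lemma le_esum_subset (T : choiceType) (I J : set T) (a : T -> \bar R) :
  I `<=` J -> \esum_(i in I) a i <= \esum_(i in J) a i.
Proof.
move=> IJ; apply: ge_ereal_sup => _ [X [finX XI]] <-.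
by apply: ereal_sup_ubound; exists X => //; split => // x /XI /IJ.
Qed.

Lemma limn_esup_leD (a b : (\bar R)^nat) (c : R) (N : nat) :
  (forall n, (N <= n)%N -> a n <= b n + c%:E) ->
  limn_esup a <= limn_esup b + c%:E.
Proof.
move=> ab; rewrite !limn_esup_lim.
have -> : limn (esups b) + c%:E = limn (fun n => esups b n + c%:E).
  by rewrite limeD ?lim_cst ?fin_num_adde_defl //; [exact: is_cvg_esups|exact: cvg_cst].
apply: lee_lim; [exact: is_cvg_esups| |].
  apply: is_cvgeD; [|exact: is_cvg_esups|exact: is_cvg_cst].
  by rewrite lim_cst // fin_num_adde_defl.
near=> n; apply: ge_ereal_sup => _ [k /= nk <-].
apply: le_trans (ab k _) _; first by apply: leq_trans nk; near: n; exists N.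
by rewrite leeD2r //; apply: ereal_sup_ubound; exists k.
Unshelve. all: by end_near. Qed.

End esum_lemmas.

Section probability_mass.
Context {R : realType} {G : groupType} (p : G -> R).
Hypothesis p_prob : is_prob_mass p.
Local Open Scope ereal_scope.

Lemma pmeas_le1 (A : set G) : pmeas p A <= 1.
Proof. by case: p_prob => _ <-; apply: le_esum_subset. Qed.

Lemma pmeas2_setXR_le (S : G -> set G) (X : set G) (c : R) :
  (0 <= c)%R -> (forall x, ~ X x -> pmeas p (S x) <= c%:E) ->
  pmeas2 p ([set: G] `*`` S) <= pmeas p X + c%:E.
Proof.
case: p_prob => p0 p1 c0 hS.
rewrite /pmeas2 -(esum_esum (a := fun x y => (p x * p y)%:E)); last first.
  by move=> *; rewrite lee_fin mulr_ge0.
apply: (@le_trans _ _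
  (\esum_(x in [set: G]) ((if x \in X then (p x)%:E else 0) + (c * p x)%:E))).
  apply: le_esum => x _; apply: le_trans (le_esumZl (S x) (p0 x) p0) _.
  case: ifPn => [xX | /negP xX].
  - rewrite -[X in X <= _]adde0 leeD ?lee_fin ?mulr_ge0 //.
    by rewrite -[leRHS]mule1 lee_wpmul2l ?lee_fin // pmeas_le1.
  - rewrite add0e EFinM [c%:E * _]muleC lee_wpmul2l ?lee_fin //.
    by apply: hS => Xx; apply: xX; rewrite in_setE.
rewrite esumD; last 2 first.
- by move=> x _; case: ifP => //; rewrite lee_fin.
- by move=> x _; rewrite lee_fin mulr_ge0.
rewrite -esum_mkcond leeD2l //.
by apply: le_trans (le_esumZl [set: G] c0 p0) _; rewrite p1 mule1.
Qed.

End probability_mass.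

Lemma detects_index_large_index {R : realType} {G : groupType}
    {mu : nat -> G -> R} { pi : R -> R } {gamma : R} :
  (forall x y, 0 < x <= 1 -> 0 < y <= 1 -> x <= y -> pi x <= pi y) ->
  detects_index_uniformly mu pi -> 0 < gamma <= 1 ->
  forall eps, 0 < eps -> exists N, forall H : set G,
    is_subgroup H -> ~ index_le H gamma^-1 ->
    forall n, (N <= n)%N -> (pmeas (mu n) H <= (pi gamma + eps)%:E)%E.
Proof.
move=> pi_mono detect /andP[g0 g1] eps eps0.
have [N detectN] := detect eps eps0; exists N => H subH Hbig n Nn.
have [m [Hm gm]] := not_index_le_index_gt Hbig.
have m0 : (0 < m)%N by rewrite -(ltr0n R); apply: lt_trans gm; rewrite invr_gt0.
apply: le_trans (detectN m H m0 subH Hm n Nn) _.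
rewrite lee_fin lerD2r; apply: pi_mono; rewrite ?g0 ?g1 //.
- by rewrite invr_gt0 ltr0n m0 /= invf_le1 ?ltr0n // ler1n.
- by rewrite ltW // invf_plt ?posrE ?ltr0n.
Qed.

Theorem proposition2p1 (R : realType) (G : groupType) (pi : R -> R)
  (mu : nat -> G -> R) (alpha gamma : R) :
  (forall x, 0 < x <= 1 -> 0 < pi x <= 1) ->
  (forall x y, 0 < x <= 1 -> 0 < y <= 1 -> x <= y -> pi x <= pi y) ->
  pi x @[x --> 0^'+] --> 0 ->
  (forall n, is_prob_mass (mu n)) ->
  detects_index_uniformly mu pi ->
  0 < alpha <= 1 ->
  (alpha%:E <= dcM mu)%E ->
  0 < gamma < 1 ->
  pi gamma < alpha ->
  ((alpha - pi gamma)%:E <=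
    limn_esup (fun n => pmeas (mu n)
      [set x : G | index_le (centraliser x) gamma^-1]))%E.
Proof.
move=> pi01 pi_mono _ mu_prob detect _ dc_ge /andP[g0 g1] _.
set X := [set x : G | index_le (centraliser x) gamma^-1].
have gamma01 : 0 < gamma <= 1 by rewrite g0 ltW.
have pig0 : 0 <= pi gamma by case/andP: (pi01 _ gamma01) => /ltW.
suff dc_le eps : 0 < eps ->
    (alpha%:E <= limn_esup (fun n => pmeas (mu n) X) + (pi gamma + eps)%:E)%E.
  apply/lee_addgt0Pr => eps eps0.
  by rewrite EFinB leeBlDr // -addeA -EFinD (addrC eps) dc_le.
move=> eps0.
have [N smallC] := detects_index_large_index pi_mono detect gamma01 _ eps0.
apply: le_trans dc_ge _; apply: (@limn_esup_leD _ _ _ _ N) => n Nn.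
rewrite commuting_pairsE; apply: pmeas2_setXR_le; first exact: mu_prob.
  by rewrite addr_ge0 // ltW.
by move=> x Xx; apply: smallC => //; apply: centraliser_subgroup.
Qed.
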